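(* Let $X\subset\mathbb{R}^n$ be a nonempty closed convex set with $X$ unbounded, and let $f(x)=c^Tx+\beta$ with $c\in\mathbb{R}^n$, $\beta\in\mathbb{R}$, be bounded from below on $X$. If $X^\infty\cap\mathcal{K}(f)=\{0\}$, then $0\notin\partial f(\infty)+N(\infty;X)$. (Hence for such $f$ and $X$ the two conditions are equivalent.)
   Context: $X^\infty=\{u:\exists t_k\to+\infty,\ \exists x_k\in X,\ x_k/t_k\to u\}$; $f^\infty(d)=\inf\{\liminf_{k} f(t_kd_k)/t_k:\ t_k\to+\infty,\ d_k\to d\}$; $\mathcal{K}(f)=\{d: f^\infty(d)\le 0\}$. $N(\infty;X)$ is the set of $u$ for which there exist $x_k\in X$, $u_k\in\widehat N(x_k;X)$ with $\|x_k\|\to\infty$ and $u_k\to u$, where $\widehat N(x;X)=\{v:\limsup_{z\to x,\,z\in X}\langle v,z-x\rangle/\|z-x\|\le 0\}$. $\partial f(\infty)$ is the set of $u$ for which there exist $x_k\in\mathbb{R}^n$ and $(u_k,v_k)\in N((x_k,f(x_k));\operatorname{epi}f)$ (limiting normal cone) with $\|x_k\|\to\infty$ and $(u_k,v_k)\to(u,-1)$. *)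

From HB Require Import structures.
From mathcomp Require Import all_boot all_order all_algebra.
From mathcomp Require Import all_classical all_reals all_analysis.
Set Implicit Arguments. Unset Strict Implicit. Unset Printing Implicit Defensive.
Import Order.TTheory GRing.Theory Num.Theory.
Import numFieldNormedType.Exports.
Local Open Scope classical_set_scope.
Local Open Scope ring_scope.

Section Defs.
Variables (R : realType) (n : nat).
Notation vec := 'rV[R]_n.

Definition dotp (u v : vec) : R := \sum_(i < n) u 0 i * v 0 i.
Definition enorm (u : vec) : R := Num.sqrt (dotp u u).

Definition unbounded (X : set vec) : Prop :=
  ~ (exists M : R, forall x, X x -> enorm x <= M).

Definition asympt_cone (X : set vec) : set vec :=
  [set u | exists (t : nat -> R) (x : nat -> vec),
     t @ \oo --> +oo /\ (forall k, X (x k)) /\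
     (fun k => (t k)^-1 *: x k) @ \oo --> u].

Definition asympt_fun (f : vec -> R) (d : vec) : \bar R :=
  ereal_inf [set l | exists (t : nat -> R) (dk : nat -> vec),
     t @ \oo --> +oo /\ dk @ \oo --> d /\
     l = limn_einf (fun k => (f (t k *: dk k) / t k)%:E)].

Definition Kcone (f : vec -> R) : set vec :=
  [set d | (asympt_fun f d <= 0)%E].

Definition frechet_normal (X : set vec) (x v : vec) : Prop :=
  forall eps : R, 0 < eps -> exists delta : R, 0 < delta /\
    forall z, X z -> 0 < enorm (z - x) < delta ->
      dotp v (z - x) <= eps * enorm (z - x).

Definition normal_at_infinity (X : set vec) : set vec :=
  [set u | exists (x : nat -> vec) (uk : nat -> vec),
     (forall k, X (x k)) /\ (forall k, frechet_normal X (x k) (uk k)) /\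
     (fun k => enorm (x k)) @ \oo --> +oo /\ uk @ \oo --> u].

Definition frechet_normal_epi (f : vec -> R) (x : vec) (r : R) (u : vec) (v : R)
  : Prop :=
  forall eps : R, 0 < eps -> exists delta : R, 0 < delta /\
    forall (z : vec) (s : R), f z <= s ->
      let nz := Num.sqrt (dotp (z - x) (z - x) + (s - r) ^+ 2) in
      0 < nz < delta -> dotp u (z - x) + v * (s - r) <= eps * nz.

Definition limiting_normal_epi (f : vec -> R) (x : vec) (r : R) (u : vec) (v : R)
  : Prop :=
  exists (xk : nat -> vec) (rk : nat -> R) (uk : nat -> vec) (vk : nat -> R),
    (forall k, f (xk k) <= rk k) /\
    xk @ \oo --> x /\ rk @ \oo --> r /\
    (forall k, frechet_normal_epi f (xk k) (rk k) (uk k) (vk k)) /\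
    uk @ \oo --> u /\ vk @ \oo --> v.

Definition subdiff_at_infinity (f : vec -> R) : set vec :=
  [set u | exists (x : nat -> vec) (uk : nat -> vec) (vk : nat -> R),
     (fun k => enorm (x k)) @ \oo --> +oo /\
     (forall k, limiting_normal_epi f (x k) (f (x k)) (uk k) (vk k)) /\
     uk @ \oo --> u /\ vk @ \oo --> (-1 : R)].

End Defs.

From HB Require Import structures.
From mathcomp Require Import all_boot all_order all_algebra.
From mathcomp Require Import all_classical all_reals all_analysis.
From mathcomp Require Import ring lra.
Set Implicit Arguments.
Unset Strict Implicit.
Unset Printing Implicit Defensive.
Import Order.TTheory GRing.Theory Num.Theory.
Import numFieldNormedType.Exports.
Local Open Scope classical_set_scope.
Local Open Scope ring_scope.

(** For an affine [f x = <c, x> + beta] every normal [(u, v)] to the epigraph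
    is proportional to [(c, -1)], so [df(oo) = {c}] and [0 \in df(oo) + N(oo; X)]
    forces [-c \in N(oo; X)]: there are [x_k \in X], [|x_k| -> oo], and
    normals [u_k -> -c] at [x_k].  Convexity gives [<u_k, z - x_k> <= 0] for a
    fixed [z \in X]; dividing by [|x_k|] along a subsequence where
    [x_k / |x_k| -> p] yields a unit vector [p \in X^oo] with [<c, p> <= 0],
    i.e. [p \in K(f)], contradicting [X^oo \cap K(f) = {0}]. *)

Section dotp_theory.
Variables (R : realType) (n : nat).
Implicit Types (u v w : 'rV[R]_n) (a : R).

Lemma dotpC u v : dotp u v = dotp v u.
Proof. by apply: eq_bigr => i _; rewrite mulrC. Qed.

Lemma dotpDr u v w : dotp u (v + w) = dotp u v + dotp u w.
Proof. by rewrite /dotp -big_split; apply: eq_bigr => i _; rewrite mxE mulrDr. Qed.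

Lemma dotpZr u v a : dotp u (a *: v) = a * dotp u v.
Proof. by rewrite /dotp mulr_sumr; apply: eq_bigr => i _; rewrite mxE mulrCA. Qed.

Lemma dotpNr u v : dotp u (- v) = - dotp u v.
Proof. by rewrite -scaleN1r dotpZr mulN1r. Qed.

Lemma dotpBr u v w : dotp u (v - w) = dotp u v - dotp u w.
Proof. by rewrite dotpDr dotpNr. Qed.

Lemma dotpDl u v w : dotp (v + w) u = dotp v u + dotp w u.
Proof. by rewrite dotpC dotpDr !(dotpC u). Qed.

Lemma dotpNl u v : dotp (- v) u = - dotp v u.
Proof. by rewrite dotpC dotpNr dotpC. Qed.

Lemma dotpZl u v a : dotp (a *: v) u = a * dotp v u.
Proof. by rewrite dotpC dotpZr dotpC. Qed.

Lemma dotp0r u : dotp u 0 = 0.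
Proof. by rewrite /dotp big1 // => i _; rewrite mxE mulr0. Qed.

Lemma sqr_coord_le_dotpp u i : u ord0 i ^+ 2 <= dotp u u.
Proof.
rewrite /dotp (bigD1 i) //= -expr2 lerDl.
by apply: sumr_ge0 => j _; rewrite -expr2 sqr_ge0.
Qed.

Lemma dotpp_ge0 u : 0 <= dotp u u.
Proof. by apply: sumr_ge0 => i _; rewrite -expr2 sqr_ge0. Qed.

Lemma dotpp_eq0 u : (dotp u u == 0) = (u == 0).
Proof.
apply/idP/eqP => [|->]; last by rewrite dotp0r.
rewrite psumr_eq0 => [/allP u0|i _]; last by rewrite -expr2 sqr_ge0.
apply/rowP => i; rewrite mxE.
by have /u0 := mem_index_enum i; rewrite /= mulf_eq0 orbb => /eqP.
Qed.

Lemma dotpp_enorm u : dotp u u = enorm u ^+ 2.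
Proof. by rewrite sqr_sqrtr // dotpp_ge0. Qed.

Lemma enormZ a u : enorm (a *: u) = `|a| * enorm u.
Proof. by rewrite /enorm dotpZl dotpZr mulrA -expr2 sqrtrM ?sqr_ge0 // sqrtr_sqr. Qed.

Lemma enorm_gt0 u : (0 < enorm u) = (u != 0).
Proof. by rewrite sqrtr_gt0 lt_neqAle dotpp_ge0 andbT eq_sym dotpp_eq0. Qed.

Lemma enorm_normalize u : u != 0 -> enorm ((enorm u)^-1 *: u) = 1.
Proof.
rewrite -enorm_gt0 => u0.
by rewrite enormZ ger0_norm ?invr_ge0 ?ltW // mulVf ?gt_eqF.
Qed.

Lemma dotpp_normalize_le1 u : dotp ((enorm u)^-1 *: u) ((enorm u)^-1 *: u) <= 1.
Proof.
have [->|u0] := eqVneq u 0; first by rewrite scaler0 dotp0r ler01.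
by rewrite dotpp_enorm enorm_normalize // expr1n.
Qed.

Lemma cvg_dotp (T : Type) (F : set_system T) (FF : Filter F) (f g : T -> 'rV[R]_n) u v :
  f x @[x --> F] --> u -> g x @[x --> F] --> v ->
  dotp (f x) (g x) @[x --> F] --> dotp u v.
Proof.
move=> fu gv; have coordC i : continuous (fun M : 'rV[R]_n => M ord0 i).
  by move=> M; apply/differentiable_continuous/differentiable_coord.
apply: (@cvg_big R 'I_n +%R 0 xpredT (fun x => add_continuous x)) => i _.
by apply: cvgM; [exact: cvg_comp _ _ fu (coordC i u) | exact: cvg_comp _ _ gv (coordC i v)].
Qed.

End dotp_theory.

Lemma le0_of_le_mul_eps (R : realFieldType) (a b : R) :
  0 <= b -> (forall eps, 0 < eps -> a <= eps * b) -> a <= 0.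
Proof.
move=> b0 aleb; rewrite leNgt; apply/negP => a0.
have [b00|bp] := eqVneq b 0.
  by have := aleb 1 ltr01; rewrite b00 mulr0 leNgt a0.
have b_gt0 : 0 < b by rewrite lt_neqAle eq_sym bp b0.
have := aleb (a / (2 * b)); rewrite divr_gt0 ?mulr_gt0 // => /(_ isT).
have -> : a / (2 * b) * b = a / 2 by field; rewrite bp.
lra.
Qed.

Section normal_cones.
Variables (R : realType) (n : nat).
Implicit Types (c x z u : 'rV[R]_n).

Lemma frechet_normal_epi_affine c beta x r u v :
  dotp c x + beta <= r ->
  frechet_normal_epi (fun x => dotp c x + beta) x r u v -> u = - v *: c.
Proof.
move=> epi_xr normal_uv; set w := u + v *: c.
suff /eqP : dotp w w = 0 by rewrite dotpp_eq0 addr_eq0 => /eqP ->; rewrite scaleNr.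
apply/eqP; rewrite eq_le dotpp_ge0 andbT.
have [->//|w0] := eqVneq (dotp w w) 0.
have ww_gt0 : 0 < dotp w w by rewrite lt_neqAle eq_sym w0 dotpp_ge0.
set N := Num.sqrt (dotp w w + dotp c w ^+ 2).
have N_gt0 : 0 < N by rewrite sqrtr_gt0 ltr_wpDr // sqr_ge0.
apply: (@le0_of_le_mul_eps _ _ N (ltW N_gt0)) => eps eps_gt0.
have [delta [delta_gt0 normal_near]] := normal_uv eps eps_gt0.
(* test the normal inequality along the epigraph direction [(w, <c, w>)] *)
set t := delta / (2 * N).
have t_gt0 : 0 < t by rewrite divr_gt0 // mulr_gt0.
have := normal_near (x + t *: w) (r + t * dotp c w).
rewrite dotpDr dotpZr addrAC lerD2r => /(_ epi_xr).
rewrite [x + _]addrC [r + _]addrC !addrK.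
have -> : Num.sqrt (dotp (t *: w) (t *: w) + (t * dotp c w) ^+ 2) = t * N.
  rewrite dotpZl dotpZr exprMn mulrA -expr2 -mulrDr sqrtrM ?sqr_ge0 //.
  by rewrite sqrtr_sqr ger0_norm // ltW.
have tN : t * N = delta / 2 by rewrite /t; field; rewrite gt_eqF.
rewrite /= tN divr_gt0 //= ltr_pdivrMr // ltr_pMr // ltr1n => /(_ isT).
have -> : dotp u (t *: w) + v * (t * dotp c w) = t * dotp w w.
  by rewrite /w dotpZr dotpDl dotpZl mulrDr (mulrCA v).
by rewrite -tN mulrCA ler_pM2l.
Qed.

Lemma cvg_proportional (uk : nat -> 'rV[R]_n) (vk : nat -> R) c u (v : R) :
  (forall k, uk k = vk k *: c) -> uk @ \oo --> u -> vk @ \oo --> v -> u = v *: c.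
Proof.
move=> /funext -> uk_u vk_v.
have vkc : (fun k => vk k *: c) @ \oo --> v *: c by apply: cvgZ => //; exact: cvg_cst.
exact: (cvg_unique _ uk_u vkc).
Qed.

Lemma limiting_normal_epi_affine c beta x r u v :
  limiting_normal_epi (fun x => dotp c x + beta) x r u v -> u = - v *: c.
Proof.
move=> [xk [rk [uk [vk [epi_k [_ [_ [normal_k [uk_u vk_v]]]]]]]]].
apply: (@cvg_proportional uk (fun k => - vk k) _ _ _ _ uk_u (cvgN vk_v)) => k.
exact: frechet_normal_epi_affine (epi_k k) (normal_k k).
Qed.

Lemma subdiff_at_infinity_affine c beta a :
  subdiff_at_infinity (fun x => dotp c x + beta) a -> a = c.
Proof.
move=> [x [uk [vk [_ [normal_k [uk_a vk_1]]]]]].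
rewrite (@cvg_proportional uk (fun k => - vk k) c _ _ _ uk_a (cvgN vk_1)).
  by rewrite opprK scale1r.
by move=> k; exact: limiting_normal_epi_affine (normal_k k).
Qed.

Lemma frechet_normal_convex (X : set 'rV[R]_n) x z u :
  convex_set X -> X x -> X z -> frechet_normal X x u -> dotp u (z - x) <= 0.
Proof.
move=> convexX Xx Xz normal_u.
have [->|zx] := eqVneq z x; first by rewrite subrr dotp0r.
set E := enorm (z - x).
have E_gt0 : 0 < E by rewrite enorm_gt0 subr_eq0.
apply: (@le0_of_le_mul_eps _ _ E (ltW E_gt0)) => eps eps_gt0.
have [delta [delta_gt0 normal_near]] := normal_u eps eps_gt0.
(* move from [x] towards [z] by less than [delta] *)
set t := delta / (delta + E).
have t_gt0 : 0 < t by rewrite divr_gt0 // addr_gt0.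
have t_le1 : t <= 1 by rewrite ler_pdivrMr ?addr_gt0 // mul1r lerDl ltW.
have Xy : X (t *: z + (1 - t) *: x).
  by have := convexX z x (Itv01 (ltW t_gt0) t_le1) (mem_set Xz) (mem_set Xx); rewrite inE.
have step : t *: z + (1 - t) *: x - x = t *: (z - x).
  by rewrite scalerBl scale1r addrCA addrAC subrr add0r scalerBr.
have := normal_near _ Xy; rewrite step enormZ gtr0_norm // mulr_gt0 //= dotpZr.
have tE : t * E < delta.
  by rewrite /t mulrAC ltr_pdivrMr ?addr_gt0 // mulrDr ltrDr mulr_gt0.
by move=> /(_ tE); rewrite mulrCA ler_pM2l.
Qed.

End normal_cones.

Lemma cvgn_subseq_idx (phi : nat -> nat) :
  (forall m, (m <= phi m)%N) -> phi m @[m --> \oo] --> \oo.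
Proof.
by move=> phi_ge A [N _ NA]; exists N => // m /= Nm; apply/NA/(leq_trans Nm).
Qed.

Lemma cvg_subseq (T : Type) (G : set_system T) (phi : nat -> nat) (u : nat -> T) :
  (forall m, (m <= phi m)%N) -> u @ \oo --> G -> (u \o phi) @ \oo --> G.
Proof. by move=> phi_ge uG; have := cvg_comp phi u (@cvgn_subseq_idx phi phi_ge) uG. Qed.

Lemma cluster_subseq (R : realType) (T : pseudoMetricType R) (u : nat -> T) (l : T) :
  cluster (u @ \oo) l ->
  exists phi : nat -> nat, (forall m, (m <= phi m)%N) /\ (u \o phi) @ \oo --> l.
Proof.
move=> ul.
have near_l m : exists k, (m <= k)%N /\ ball l m.+1%:R^-1 (u k).
  have tail_m : (u @ \oo) [set v | exists k, (m <= k)%N /\ v = u k].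
    by exists m => // k /= mk; exists k.
  have m_gt0 : 0 < (m.+1%:R : R)^-1 by rewrite invr_gt0 ltr0Sn.
  have [v [[k [mk ->]] ukl]] := ul _ _ tail_m (nbhsx_ballx l _ m_gt0).
  by exists k.
have [phi phi_spec] := choice near_l.
exists phi; split => [m|]; first by case: (phi_spec m).
apply/cvg_ballP => eps eps_gt0.
have [N _ N_gt] := (@cvgryPgt R nat \oo _ (fun m => m%:R)).1 (@cvgr_idn R) eps^-1.
exists N => // m /= Nm; case: (phi_spec m) => _; apply: le_ball.
by rewrite invf_ple ?posrE ?ltr0Sn // (le_trans (ltW (N_gt _ Nm))) // ler_nat.
Qed.

Section asymptotic_directions.
Variables (R : realType) (n : nat).

Lemma unit_ball_cluster (d : nat -> 'rV[R]_n) :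
  (forall k, dotp (d k) (d k) <= 1) -> exists p, cluster (d @ \oo) p.
Proof.
move=> d_le1.
pose S := [set v : 'rV[R]_n | forall i, (fun=> `[-1, 1]%classic) i (v ord0 i)].
have S_compact : compact S by apply: rV_compact => i; exact: segment_compact.
have dS : (d @ \oo) S.
  exists 0%N => // k _ i /=; rewrite in_itv /=.
  have := le_trans (sqr_coord_le_dotpp (d k) i) (d_le1 k).
  by move=> h; apply/andP; split; nra.
by have [p [_ dp]] := S_compact _ _ dS; exists p.
Qed.

Lemma normalized_subseq (x : nat -> 'rV[R]_n) :
  (fun k => enorm (x k)) @ \oo --> +oo ->
  exists (phi : nat -> nat) (p : 'rV[R]_n), [/\ forall m, (m <= phi m)%N, p != 0 &
    (fun m => (enorm (x (phi m)))^-1 *: x (phi m)) @ \oo --> p].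
Proof.
move=> x_oo; set d := fun k => (enorm (x k))^-1 *: x k.
have [p /cluster_subseq [phi [phi_ge dp]]] :=
  unit_ball_cluster (fun k => dotpp_normalize_le1 (x k)).
exists phi, p; split => //.
have x_gt0 : \forall m \near \oo, 0 < enorm (x (phi m)).
  by apply: (cvgryPgt _).1 0; exact: cvg_subseq phi_ge x_oo.
have d1 : {near \oo, (fun=> 1) =1 (fun m => dotp (d (phi m)) (d (phi m)))}.
  near=> m; have xm : 0 < enorm (x (phi m)) by near: m.
  by rewrite /= dotpp_enorm enorm_normalize ?expr1n // -enorm_gt0.
have dd_p : (fun m => dotp (d (phi m)) (d (phi m))) @ \oo --> dotp p p.
  by apply: cvg_dotp; exact: dp.
have dd_1 : (fun m => dotp (d (phi m)) (d (phi m))) @ \oo --> (1 : R).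
  exact: cvg_trans (near_eq_cvg d1) (cvg_cst _).
have pp1 : dotp p p = 1 by exact: (cvg_unique _ dd_p dd_1).
by rewrite -dotpp_eq0 pp1 oner_eq0.
Unshelve. all: by end_near.
Qed.

Lemma normal_at_infinity_convex (X : set 'rV[R]_n) b z :
  convex_set X -> X z -> normal_at_infinity X b ->
  exists p, [/\ p != 0, asympt_cone X p & 0 <= dotp b p].
Proof.
move=> convexX Xz [x [uk [Xx [normal_k [x_oo uk_b]]]]].
have [phi [p [phi_ge p0 dp]]] := normalized_subseq x_oo.
set t := fun m => enorm (x (phi m)).
have t_oo : t @ \oo --> +oo by exact: cvg_subseq phi_ge x_oo.
have t_gt0 : \forall m \near \oo, 0 < t m by exact: (cvgryPgt t).1 t_oo 0.
exists p; split => //; first by exists t, (x \o phi); split => //; split => // k; exact: Xx.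
have ukb := cvg_subseq phi_ge uk_b.
have tV0 : (fun m => (t m)^-1) @ \oo --> (0 : R) by exact: (gtr0_cvgV0 t_gt0).2 t_oo.
(* divide the convexity inequality [<u_k, z> <= <u_k, x_k>] by [|x_k|] *)
have lhs : (fun m => (t m)^-1 * dotp (uk (phi m)) z) @ \oo --> 0 * dotp b z.
  by apply: cvgM tV0 _; apply: cvg_dotp ukb (cvg_cst z).
have rhs : (fun m => dotp (uk (phi m)) ((t m)^-1 *: x (phi m))) @ \oo --> dotp b p.
  exact: cvg_dotp ukb dp.
rewrite -(mul0r (dotp b z)); apply: ler_cvg_to lhs rhs _.
near=> m; have tm : 0 < t m by near: m.
have := frechet_normal_convex convexX (Xx (phi m)) Xz (normal_k (phi m)).
by rewrite dotpBr subr_le0 dotpZr ler_pM2l ?invr_gt0.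
Unshelve. all: by end_near.
Qed.

Lemma Kcone_affine (c p : 'rV[R]_n) beta :
  dotp c p <= 0 -> Kcone (fun x => dotp c x + beta) p.
Proof.
move=> cp; apply: ge_ereal_inf.
pose t k : R := k%:R.
have t_gt0 : \forall k \near \oo, 0 < t k by exact: (cvgryPgt t).1 (@cvgr_idn R) 0.
exists (limn_einf (fun k => ((dotp c (t k *: p) + beta) / t k)%:E)).
  by exists t, (fun=> p); split; [exact: cvgr_idn | split => //; exact: cvg_cst].
have slope : {near \oo, (fun k => dotp c p + beta * (t k)^-1) =1
                        (fun k => (dotp c (t k *: p) + beta) / t k)}.
  near=> k; have tk : 0 < t k by near: k.
  by rewrite /= dotpZr mulrDl mulrAC mulfV ?gt_eqF // mul1r.
have slope_cvg : (fun k => (dotp c (t k *: p) + beta) / t k) @ \oo --> dotp c p.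
  apply: cvg_trans (near_eq_cvg slope) _.
  suff : (fun k => dotp c p + beta * (t k)^-1) @ \oo --> dotp c p + beta * 0.
    by rewrite mulr0 addr0.
  apply: cvgD; first exact: cvg_cst.
  by apply: cvgM; [exact: cvg_cst | exact/(gtr0_cvgV0 t_gt0).2/cvgr_idn].
have slope_cvgE : (fun k => ((dotp c (t k *: p) + beta) / t k)%:E) @ \oo --> (dotp c p)%:E.
  by apply: cvg_EFin slope_cvg; near=> k.
by rewrite (cvg_limn_einf_sup slope_cvgE).1 lee_fin.
Unshelve. all: by end_near.
Qed.

End asymptotic_directions.

Theorem mainTheorem3 (R : realType) (n : nat) (X : set 'rV[R]_n)
  (c : 'rV[R]_n) (beta : R) :
  X !=set0 -> closed X -> convex_set X -> unbounded X ->
  (exists m : R, forall x, X x -> m <= dotp c x + beta) ->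
  asympt_cone X `&` Kcone (fun x => dotp c x + beta) = [set 0] ->
  ~ (exists a b, subdiff_at_infinity (fun x => dotp c x + beta) a /\
                 normal_at_infinity X b /\ a + b = 0).
Proof.
move=> [z Xz] _ convexX _ _ cone_meet [a [b [a_subdiff [b_normal ab0]]]].
have b_eq : b = - c.
  by rewrite -(subdiff_at_infinity_affine a_subdiff); apply/eqP; rewrite -addr_eq0 addrC ab0.
have [p [p0 p_cone]] := normal_at_infinity_convex convexX Xz b_normal.
rewrite b_eq dotpNl oppr_ge0 => /(Kcone_affine beta) p_K.
have : (asympt_cone X `&` Kcone (fun x => dotp c x + beta)) p by split.
by rewrite cone_meet => /eqP; rewrite (negbTE p0).
Qed.
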